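(* Let $d \ge 0$ be an integer, let $V(K_n) = X \cup Y$ be a partition, and let $c : E(K_n) \to \{R,G,B\}$ be an almost Gallai colouring of $K_n$ such that $|N_G(y) \cap X| \le d$ for all $y \in Y$. Then \[ \tau^{G}_{\mathrm{rb}}(X,Y) \le \frac{e}{2}(d+1)\,|X| \log |X|. \]
   Context: A colouring of $E(K_n)$ is almost Gallai if no two rainbow triangles share an edge, where a triangle is rainbow if its three edges have pairwise distinct colours. $N_G(y)$ is the set of vertices joined to $y$ by a green edge. For disjoint $X, Y \subseteq V(K_n)$ and a colour $q$, $\tau^{q}_{\mathrm{rb}}(X,Y)$ is the number of rainbow triangles $y x_1 x_2$ with $y \in Y$, $x_1, x_2 \in X$ and $x_1x_2$ coloured $q$. Logarithms are in base 2. *)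

From mathcomp Require Import all_boot.
From Stdlib Require Import Reals.
Set Implicit Arguments. Unset Strict Implicit. Unset Printing Implicit Defensive.

Definition colour := 'I_3.
Definition Red : colour := @Ordinal 3 0 isT.
Definition Green : colour := @Ordinal 3 1 isT.
Definition Blue : colour := @Ordinal 3 2 isT.

(* An edge colouring of K_n: a symmetric function on pairs of vertices;
   only its values on pairs of distinct vertices matter. *)
Definition edge_colouring (n : nat) (c : 'I_n -> 'I_n -> colour) : Prop :=
  forall u v, c u v = c v u.

Definition rainbow (n : nat) (c : 'I_n -> 'I_n -> colour) (u v w : 'I_n) : bool :=
  [&& u != v, v != w, u != w,
      c u v != c v w, c u v != c u w & c v w != c u w].

(* Almost Gallai: no two (distinct) rainbow triangles share an edge. *)
Definition almost_gallai (n : nat) (c : 'I_n -> 'I_n -> colour) : Prop :=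
  forall u v w w' : 'I_n, rainbow c u v w -> rainbow c u v w' -> w = w'.

Definition NG (n : nat) (c : 'I_n -> 'I_n -> colour) (y : 'I_n) : {set 'I_n} :=
  [set x | (x != y) && (c y x == Green)].

(* tau^q_rb(X,Y): number of rainbow triangles y x1 x2 with y in Y, x1, x2 in X
   and x1x2 coloured q (unordered pair {x1,x2} counted once via x1 < x2). *)
Definition tau_rb (n : nat) (c : 'I_n -> 'I_n -> colour) (q : colour)
    (X Y : {set 'I_n}) : nat :=
  #|[set t : 'I_n * ('I_n * 'I_n) |
      [&& t.1 \in Y, t.2.1 \in X, t.2.2 \in X, (t.2.1 < t.2.2)%N,
          c t.2.1 t.2.2 == q & rainbow c t.1 t.2.1 t.2.2]]|.

Definition log2 (x : R) : R := (ln x / ln 2)%R.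

(* Colour the vertices with d+1 colours by h and pick a colour i; say that
   (h, i) captures the green-based rainbow triangle y x1 x2 when
   h x1 = h x2 = i and no green neighbour of y in X has colour i.  As y has at
   most d green neighbours in X, none of them x1 or x2, each triangle is
   captured by at least (d+1)^(n-1) (d/(d+1))^d pairs (h, i), and
   ((d+1)/d)^d <= e.
   For fixed (h, i), the captured triangles have their bases in the class
   Z = h^-1(i) :&: X.  The apex of each of them sees its two base vertices in
   the two colours red and blue, triangles with a common apex have disjoint
   bases, and every other apex sees both ends of a base in the same colour,
   for otherwise two rainbow triangles would share the green base edge
   (almost Gallai).  Splitting Z by the red neighbourhood of one apex and
   inducting on |Z| bounds the number of such triangles by |Z| log2 |Z| / 2,
   thanks to  a ln a + b ln b + 2 min(a, b) ln 2 <= (a + b) ln (a + b).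
   Summing over all pairs (h, i) gives the theorem. *)

From mathcomp Require Import all_boot.
From Stdlib Require Import Reals Lra Psatz.
From mathcomp Require Import zify.

Set Implicit Arguments.
Unset Strict Implicit.
Unset Printing Implicit Defensive.

(* [ln 0] is a junk value, annihilated by the factor [INR 0 = 0]. *)
Definition nlnn (k : nat) : R := (INR k * ln (INR k))%R.

Section RealBounds.
Local Open Scope R_scope.

Lemma ln_le_sub1 (z : R) : 0 < z -> ln z <= z - 1.
Proof. by move=> z_gt0; have := exp_ineq1_le (ln z); rewrite exp_ln //; lra. Qed.

Lemma ln_le (x y : R) : 0 < x -> x <= y -> ln x <= ln y.
Proof.
move=> x_gt0 /Rle_lt_or_eq_dec [lt_xy | ->]; last exact: Rle_refl.
exact/Rlt_le/ln_increasing.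
Qed.

Lemma ln2_le1 : ln 2 <= 1.
Proof. by have := @ln_le_sub1 2 Rlt_0_2; lra. Qed.

Lemma sub_le_mul_ln_ratio (x y : R) : 0 < x -> 0 < y -> x - y <= x * (ln x - ln y).
Proof.
move=> x_gt0 y_gt0.
have ln_yx : ln (y / x) = ln y - ln x.
  rewrite /Rdiv ln_mult; [rewrite ln_Rinv //; lra | lra | exact: Rinv_0_lt_compat].
have := ln_le_sub1 (Rdiv_lt_0_compat _ _ y_gt0 x_gt0).
rewrite ln_yx => h.
have := Rmult_le_compat_l x _ _ (Rlt_le _ _ x_gt0) h.
have -> : x * (y / x - 1) = y - x by field; lra.
lra.
Qed.

Lemma xlnx_split (a b : R) : 0 < a <= b ->
  a * ln a + b * ln b + 2 * a * ln 2 <= (a + b) * ln (a + b).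
Proof.
(* With [s = a + b], use [ln u >= 1 - 1/u] at [u = s/(2a)], and at
   [u = s/b] if [2a <= b], at [u = s/(2b)] otherwise. *)
move=> [a_gt0 le_ab]; set s := a + b.
have s_gt0 : 0 < s by rewrite /s; lra.
have ln2_gt : / 2 < ln 2 := ln_lt_2.
have ln2_le := ln2_le1.
have ln_2a : ln (2 * a) = ln 2 + ln a by rewrite ln_mult; lra.
have ln_2b : ln (2 * b) = ln 2 + ln b by rewrite ln_mult; lra.
have ha := @sub_le_mul_ln_ratio s (2 * a) s_gt0 ltac:(lra).
rewrite ln_2a in ha.
apply: (Rmult_le_reg_l s) => //.
have a_ha := Rmult_le_compat_l a _ _ (Rlt_le _ _ a_gt0) ha.
case: (Rle_lt_dec (2 * a) b) => hb.
- have hb' := @sub_le_mul_ln_ratio s b s_gt0 ltac:(lra).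
  have b_hb' := Rmult_le_compat_l b _ _ ltac:(lra) hb'.
  have : 0 <= a * s * (1 - ln 2) by apply: Rmult_le_pos; nra.
  have : 0 <= a * (b - 2 * a) by nra.
  rewrite /s in a_ha b_hb' *; nra.
- have hb' := @sub_le_mul_ln_ratio s (2 * b) s_gt0 ltac:(lra).
  rewrite ln_2b in hb'.
  have b_hb' := Rmult_le_compat_l b _ _ ltac:(lra) hb'.
  have : 0 <= (b - a) * (s * ln 2 - (b - a)) by apply: Rmult_le_pos; rewrite /s; nra.
  rewrite /s in a_ha b_hb' *; nra.
Qed.

Lemma nlnn0 : nlnn 0 = 0.
Proof. by rewrite /nlnn Rmult_0_l. Qed.

Lemma nlnn_ge0 (k : nat) : 0 <= nlnn k.
Proof.
case: k => [|k]; first by rewrite nlnn0; lra.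
apply: Rmult_le_pos; first exact: pos_INR.
by rewrite -ln_1; apply: ln_le; [lra | rewrite S_INR; have := pos_INR k; lra].
Qed.

Lemma nlnn_split (a b m : nat) : (m <= a)%nat -> (m <= b)%nat ->
  nlnn a + nlnn b + INR m * (2 * ln 2) <= nlnn (a + b).
Proof.
wlog le_ab : a b / (a <= b)%nat => [W|] ma mb.
  case: (leqP a b) => [|/ltnW] h; first exact: W.
  by rewrite addnC (Rplus_comm (nlnn a)); apply: W.
case: a => [|a] in le_ab ma *.
  by move: ma; rewrite leqn0 => /eqP ->; rewrite nlnn0 add0n Rmult_0_l; lra.
have ma' := le_INR _ _ (elimT leP ma).
have ab' := le_INR _ _ (elimT leP le_ab).
have a_gt0 : 0 < INR a.+1 by apply: lt_0_INR; apply/ltP.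
have := xlnx_split (conj a_gt0 ab').
have := ln_lt_2.
rewrite /nlnn plus_INR; nra.
Qed.

Lemma nlnn_le_mul_ln (k N : nat) : (k <= N)%nat -> nlnn k <= INR k * ln (INR N).
Proof.
case: k => [|k] le_kN; first by rewrite nlnn0 Rmult_0_l; lra.
apply: Rmult_le_compat_l; first exact: pos_INR.
by apply: ln_le; [apply/lt_0_INR/ltP | apply/le_INR/leP].
Qed.

Lemma INR_sum_mul_le (I : finType) (a b : I -> nat) (K r : R) :
  (forall i, INR (a i) * K <= INR (b i) * r) ->
  INR (\sum_i a i) * K <= INR (\sum_i b i) * r.
Proof.
move=> le_ab; elim/big_rec2: _ => [|i x y _ IH]; first by rewrite !Rmult_0_l; lra.
by rewrite !plus_INR; have := le_ab i; lra.
Qed.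

Lemma INR_expn (m k : nat) : INR (expn m k) = INR m ^ k.
Proof. by elim: k => [|k IH]; rewrite ?expn0 // expnS mult_INR IH. Qed.

Lemma pow_succ_le_exp1 (d : nat) : INR d.+1 ^ d <= exp 1 * INR d ^ d.
Proof.
case: d => [|d]; first by have := exp_ineq1_le 1; rewrite /= Rmult_1_r; lra.
set D := INR d.+1.
have D_gt0 : 0 < D by apply: lt_0_INR; apply/ltP.
have exp_invD : exp (/ D) ^ d.+1 = exp 1.
  rewrite -(exp_ln (exp (/ D) ^ d.+1)); last exact/pow_lt/exp_pos.
  by rewrite ln_pow ?ln_exp -/D; [congr exp; field; lra | exact: exp_pos].
have succ_le : INR d.+2 <= D * exp (/ D).
  have := exp_ineq1_le (/ D); rewrite S_INR -/D => h.
  have -> : D + 1 = D * (1 + / D) by field; lra.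
  by apply: Rmult_le_compat_l; lra.
rewrite -exp_invD -Rpow_mult_distr Rmult_comm.
by apply: pow_incr; split; [exact: pos_INR |].
Qed.
End RealBounds.

(* A triple [(y, (a, b))] is a triangle with apex [y] and base [ab]; [red y x]
   tells on which side of the apex [y] the vertex [x] lies. *)
Section SeparatedTriples.
Variables (V L : finType) (red : L -> V -> bool).
Notation triple := (L * (V * V))%type.

Definition shares_vertex (t t' : triple) : bool :=
  [|| t.2.1 == t'.2.1, t.2.1 == t'.2.2, t.2.2 == t'.2.1 | t.2.2 == t'.2.2].

Definition based_in (Z : {set V}) (E : {set triple}) : Prop :=
  {in E, forall t, (t.2.1 \in Z) && (t.2.2 \in Z)}.

Definition separating (E : {set triple}) : Prop :=
  [/\ {in E, forall t, red t.1 t.2.1 != red t.1 t.2.2},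
      {in E &, forall t t', t.1 != t'.1 -> red t'.1 t.2.1 = red t'.1 t.2.2}
    & {in E &, forall t t', t.1 = t'.1 -> shares_vertex t t' -> t = t'}].

Lemma separatingS (E E' : {set triple}) : E' \subset E -> separating E -> separating E'.
Proof.
move=> /subsetP sE [sep foreign matching]; split=> [t /sE|t t' /sE + /sE|t t' /sE + /sE].
- exact: sep.
- exact: foreign.
- exact: matching.
Qed.

Section Apex.
Variables (Z : {set V}) (E : {set triple}) (y : L).
Hypotheses (EZ : based_in Z E) (sepE : separating E).

Definition apex_triples := [set t in E | t.1 == y].
Definition side (s : bool) := [set x in Z | red y x == s].
Definition side_triples (s : bool) := [set t in E | (t.1 != y) && (red y t.2.1 == s)].

Lemma card_side : #|Z| = #|side true| + #|side false|.
Proof.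
rewrite -(cardsID [set x | red y x] Z); congr (_ + _); apply: eq_card => x;
  by rewrite !inE; case: (red y x); rewrite ?andbT ?andbF.
Qed.

Lemma card_apex_triples_le_side (s : bool) : #|apex_triples| <= #|side s|.
Proof.
have [sep _ matching] := sepE.
pose pick (t : triple) := if red y t.2.1 == s then t.2.1 else t.2.2.
have apexP t : t \in apex_triples -> (t \in E) /\ t.1 = y.
  by rewrite inE => /andP [tE /eqP].
rewrite -(card_in_imset (f := pick)).
  apply/subset_leq_card/subsetP => _ /imsetP [t /apexP [tE ty] ->].
  have /andP [aZ bZ] := EZ tE; have := sep t tE; rewrite ty /pick !inE; clear pick.
  by case: ifP => [/eqP ->|]; rewrite ?aZ ?bZ //=; case: s (red y _) (red y _) => [] [] [].
move=> t t' /apexP [tE ty] /apexP [t'E t'y]; rewrite /pick => eq_pick.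
apply: matching; rewrite ?ty ?t'y // /shares_vertex.
by move: eq_pick; do 2 case: ifP => _; move=> ->; rewrite eqxx ?orbT.
Qed.

Lemma side_triples_based (s : bool) : y \in [set t.1 | t in E] ->
  based_in (side s) (side_triples s).
Proof.
have [_ foreign _] := sepE.
case/imsetP => t0 t0E y_t0 t; rewrite inE y_t0 => /andP [tE /andP [tt0 ys]].
have /andP [aZ bZ] := EZ tE.
by rewrite !inE y_t0 aZ bZ -(foreign t t0 tE t0E tt0) (eqP ys) eqxx.
Qed.

Lemma card_triples_le_split :
  #|E| <= #|apex_triples| + (#|side_triples true| + #|side_triples false|).
Proof.
apply: (@leq_trans #|apex_triples :|: (side_triples true :|: side_triples false)|).
  by apply/subset_leq_card/subsetP => t tE; rewrite !inE tE; case: (t.1 == y); case: (red y t.2.1).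
by apply: leq_trans (leq_card_setU _ _) _; rewrite leq_add2l leq_card_setU.
Qed.
End Apex.

Lemma separating_card_le (Z : {set V}) (E : {set triple}) :
  based_in Z E -> separating E -> (INR #|E| * (2 * ln 2) <= nlnn #|Z|)%R.
Proof.
move kZ: #|Z| => k; elim/ltn_ind: k Z E kZ => k IH Z E kZ EZ sepE.
have [E0|/set0Pn [t0 t0E]] := eqVneq E set0.
  by rewrite E0 cards0 Rmult_0_l; apply: nlnn_ge0.
set y := t0.1.
have y_apex : y \in [set t.1 | t in E] by apply: imset_f.
have apex_gt0 : 0 < #|apex_triples E y|.
  by apply/card_gt0P; exists t0; rewrite inE t0E eqxx.
have IHs s : (INR #|side_triples E y s| * (2 * ln 2) <= nlnn #|side Z y s|)%R.
  apply: (IH _ _ _ _ erefl).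
  - rewrite -kZ (card_side Z y); have := card_apex_triples_le_side y EZ sepE (~~ s).
    by move: apex_gt0; case: s => /=; lia.
  - exact: side_triples_based.
  - by apply: separatingS sepE; apply/subsetP => t; rewrite inE => /andP [].
have split := nlnn_split (card_apex_triples_le_side y EZ sepE true)
                         (card_apex_triples_le_side y EZ sepE false).
have cover := le_INR _ _ (elimT leP (card_triples_le_split E y)).
rewrite !plus_INR in cover.
have := IHs true; have := IHs false; have := ln_lt_2.
rewrite -kZ (card_side Z y); nra.
Qed.
End SeparatedTriples.

Section RainbowSymmetry.
Variables (n : nat) (c : 'I_n -> 'I_n -> colour).
Hypothesis c_sym : edge_colouring c.

Lemma rainbow_swap12 u v w : rainbow c u v w -> rainbow c v u w.
Proof.
rewrite /rainbow (c_sym v u) => /and5P [uv vw uw e1 /andP [e2 e3]].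
by rewrite eq_sym uv uw vw e2 e1 eq_sym e3.
Qed.

Lemma rainbow_swap23 u v w : rainbow c u v w -> rainbow c u w v.
Proof.
rewrite /rainbow (c_sym w v) => /and5P [uv vw uw e1 /andP [e2 e3]].
by rewrite uw eq_sym vw uv eq_sym e3 eq_sym e2 eq_sym e1.
Qed.
End RainbowSymmetry.

Lemma nongreen_red_neq (a b : colour) :
  a != Green -> b != Green -> a != b -> (a == Red) != (b == Red).
Proof. by case: a => [[|[|[|?]]] ?]; case: b => [[|[|[|?]]] ?]. Qed.

Lemma card_ffun_pinned (T : finType) (k : nat) (i : 'I_k) (S G : {set T}) :
  [disjoint S & G] ->
  #|[set h : {ffun T -> 'I_k} | [forall x in S, h x == i] && [forall x in G, h x != i]]|
    = expn k.-1 #|G| * expn k #|~: (S :|: G)|.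
Proof.
move=> SG.
have notS x : x \in G -> x \notin S.
  by move=> xG; apply: contraL SG => xS; apply/pred0Pn; exists x; apply/andP.
pose F x : pred 'I_k := if x \in S then pred1 i else if x \in G then predC1 i else predT.
have -> : #|[set h : {ffun T -> 'I_k} | [forall x in S, h x == i] &&
                                         [forall x in G, h x != i]]| = #|finfun.family F|.
  apply: eq_card => h; rewrite inE; apply/andP/familyP => [[/forall_inP hS /forall_inP hG] x|hF].
  - by rewrite /F; case: ifP => [/hS|_]; last case: ifP => [/hG|].
  - split; apply/forall_inP => x x_in; have := hF x; rewrite /F x_in //.
    by rewrite (negbTE (notS x x_in)).
have card_F x : #|F x| = if x \in S then 1 else if x \in G then k.-1 else k.
  rewrite /F; case: ifP => _; first exact: card1.
  case: ifP => _; last by rewrite -[RHS]card_ord; apply: eq_card.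
  by rewrite cardC1 card_ord.
rewrite card_family foldrE big_image /= (eq_bigr _ (fun x _ => card_F x)).
rewrite (bigID (mem S)) /= big1 ?mul1n; last by move=> x ->.
rewrite (bigID (mem G)) /=.
rewrite (eq_bigr (fun=> k.-1)) => [|x /andP [/negbTE -> ->] //].
rewrite [X in (_ * X)](eq_bigr (fun=> k)) => [|x /andP [/negbTE -> /negbTE ->] //].
rewrite !prod_nat_const; congr (expn _ _ * expn _ _); apply: eq_card => x; rewrite unfold_in /=.
- by rewrite andb_idl //; apply: notS.
- by rewrite !inE negb_or.
Qed.

Lemma expn_succ_mul_le (d g : nat) : g <= d ->
  expn d.+1 g * expn d d <= expn d.+1 d * expn d g.
Proof.
move=> le_gd.
have le_rest : expn d (d - g) <= expn d.+1 (d - g).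
  by case: (d - g) => [|e] //; rewrite leq_exp2r.
have split_d m : expn m d = expn m g * expn m (d - g) by rewrite -expnD subnKC.
by rewrite (split_d d) (split_d d.+1) mulnAC -mulnA !leq_mul2l le_rest !orbT.
Qed.

Lemma expn_capture_le (d g r : nat) : g <= d ->
  expn d.+1 (g + r + 2) * expn d d <= expn d.+1 d.+2 * (expn d g * expn d.+1 r).
Proof.
move=> /expn_succ_mul_le /(leq_mul (leqnn (expn d.+1 r * expn d.+1 2))).
rewrite -(addn2 d) !expnD.
move: (expn d.+1 r) (expn d.+1 2) (expn d.+1 g) (expn d d) (expn d.+1 d) (expn d g).
move=> a b e f k l; nia.
Qed.

Lemma card_set_sum (T : finType) (P : pred T) : #|[set x | P x]| = \sum_x P x.
Proof. by rewrite -sum1dep_card big_mkcond. Qed.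

Section GreenRainbowTriangles.
Variables (n d : nat) (X Y : {set 'I_n}) (c : 'I_n -> 'I_n -> colour).
Hypotheses (XY0 : X :&: Y = set0) (c_sym : edge_colouring c) (c_ag : almost_gallai c).

Definition green_rb_triples : {set 'I_n * ('I_n * 'I_n)} :=
  [set t | [&& t.1 \in Y, t.2.1 \in X, t.2.2 \in X, t.2.1 < t.2.2,
               c t.2.1 t.2.2 == Green & rainbow c t.1 t.2.1 t.2.2]].
Local Notation T := green_rb_triples.

Lemma X_neq_Y x y : x \in X -> y \in Y -> x != y.
Proof.
move=> xX yY; apply: contraT => /negPn /eqP xy.
by have := in_set0 x; rewrite -XY0 inE xX xy yY.
Qed.

Lemma green_rb_apex_nongreen y a b : (y, (a, b)) \in T ->
  (c y a != Green) && (c y b != Green).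
Proof.
rewrite inE => /and4P [_ _ _ /and3P [_ /eqP <- /and5P [_ _ _ ya_ab /andP [_ ab_yb]]]].
by rewrite ya_ab eq_sym ab_yb.
Qed.

Lemma green_rb_matching :
  {in T &, forall t t', t.1 = t'.1 -> shares_vertex t t' -> t = t'}.
Proof.
have rbP y a b : (y, (a, b)) \in T -> ((a < b) * rainbow c y a b)%type.
  by rewrite inE => /and4P [_ _ _ /and3P [-> _ ->]].
move=> [y [a b]] [y' [a' b']] /rbP [ab rb] /rbP [ab' rb'] /= yy'.
rewrite -{y'}yy' in rb' *.
have swap := rainbow_swap23 c_sym.
case/or4P => /= /eqP e; subst.
- by rewrite (c_ag rb rb').
- by have := ltn_trans ab' ab; rewrite (c_ag rb (swap _ _ _ rb')) ltnn.
- by have := ltn_trans ab ab'; rewrite (c_ag (swap _ _ _ rb) rb') ltnn.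
- by rewrite (c_ag (swap _ _ _ rb) (swap _ _ _ rb')).
Qed.

Lemma rainbow_nongreen_apex a b y : a \in X -> b \in X -> y \in Y -> a != b ->
  c a b = Green -> c y a != Green -> c y b != Green -> c y a != c y b ->
  rainbow c a b y.
Proof.
move=> aX bX yY ab g ya yb yab.
rewrite /rainbow ab (X_neq_Y bX yY) (X_neq_Y aX yY) g (c_sym b y) (c_sym a y).
by rewrite eq_sym yb eq_sym ya eq_sym yab.
Qed.

Hypothesis green_deg : forall y, y \in Y -> #|NG c y :&: X| <= d.

Definition avoids (h : {ffun 'I_n -> 'I_d.+1}) (i : 'I_d.+1) (y : 'I_n) : bool :=
  [forall x in X, (c y x == Green) ==> (h x != i)].
Definition captures (h : {ffun 'I_n -> 'I_d.+1}) (i : 'I_d.+1)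
    (t : 'I_n * ('I_n * 'I_n)) : bool :=
  [&& h t.2.1 == i, h t.2.2 == i & avoids h i t.1].
Definition captured_triples h i := [set t in T | captures h i t].
Definition colour_class (h : {ffun 'I_n -> 'I_d.+1}) (i : 'I_d.+1) := [set x in X | h x == i].

Lemma captured_triples_based h i : based_in (colour_class h i) (captured_triples h i).
Proof.
move=> [y [a b]]; rewrite !inE => /andP [/and3P [_ aX /andP [bX _]] /and3P [ha hb _]].
by rewrite /= aX bX ha hb.
Qed.

Lemma captured_triples_separating h i :
  separating (fun y x => c y x == Red) (captured_triples h i).
Proof.
split.
- move=> [y [a b]]; rewrite inE => /andP [tT _] /=.
  have /andP [ya yb] := green_rb_apex_nongreen tT.
  move: tT; rewrite inE => /and4P [_ _ _ /and3P [_ _ /and5P [_ _ _ _ /andP [? _]]]].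
  exact: nongreen_red_neq.
- move=> [y [a b]] [y' [a' b']]; rewrite !inE /=.
  move=> /andP [/and4P [_ aX bX /and3P [ab /eqP g rb]] /and3P [ha hb _]].
  move=> /andP [/andP [y'Y _] /and3P [_ _ /forall_inP avoid']] yy'.
  have nongreen x : x \in X -> h x == i -> c y' x != Green.
    by move=> xX hx; apply: contraTN hx => /(implyP (avoid' x xX)).
  case: (eqVneq (c y' a) (c y' b)) => [-> //|ne].
  have rb' := rainbow_nongreen_apex aX bX y'Y (negbT (ltn_eqF ab)) g
                (nongreen a aX ha) (nongreen b bX hb) ne.
  have rb_ab := rainbow_swap23 c_sym (rainbow_swap12 c_sym rb).
  by rewrite (c_ag rb_ab rb') eqxx in yy'.
- move=> t t' /setIdP [tT _] /setIdP [t'T _].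
  exact: green_rb_matching.
Qed.

Lemma sum_card_colour_class h : \sum_i #|colour_class h i| = #|X|.
Proof.
rewrite -sum1_card (partition_big h predT) //=.
by apply: eq_bigr => i _; rewrite sum1dep_card.
Qed.

Lemma card_captured_triples_le h i :
  (INR #|captured_triples h i| * (2 * ln 2) <= nlnn #|colour_class h i|)%R.
Proof.
apply: separating_card_le; [exact: captured_triples_based | exact: captured_triples_separating].
Qed.

Lemma sum_card_captured_triples_le :
  (INR (\sum_h \sum_i #|captured_triples h i|) * (2 * ln 2)
     <= INR (expn d.+1 n * #|X|) * ln (INR #|X|))%R.
Proof.
have -> : expn d.+1 n * #|X| = \sum_(h : {ffun 'I_n -> 'I_d.+1}) #|X|.
  rewrite sum_nat_const; congr (_ * _).
  by transitivity #|{ffun 'I_n -> 'I_d.+1}|; [rewrite card_ffun !card_ord | apply: eq_card].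
apply: INR_sum_mul_le => h; rewrite -{1}(sum_card_colour_class h).
apply: INR_sum_mul_le => i; apply: Rle_trans (card_captured_triples_le h i) _.
by apply: nlnn_le_mul_ln; apply/subset_leq_card/subsetP => x /setIdP [].
Qed.

Lemma sum_card_captured_triples :
  \sum_h \sum_i #|captured_triples h i|
    = \sum_(t in T) \sum_i #|[set h | captures h i t]|.
Proof.
under eq_bigr => h _ do under eq_bigr => i _ do rewrite card_set_sum.
under [RHS]eq_bigr => t _ do under eq_bigr => i _ do rewrite card_set_sum.
under eq_bigr => h _ do rewrite exchange_big.
rewrite exchange_big [RHS]big_mkcond; apply: eq_bigr => t _; rewrite exchange_big.
case: (boolP (t \in T)) => tT //=.
by rewrite big1 // => i _; rewrite big1.
Qed.

Lemma card_capturing_ge t i : t \in T ->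
  expn d.+1 n * expn d d <= expn d.+1 d.+2 * #|[set h | captures h i t]|.
Proof.
case: t => y [a b] tT; have /andP [ya yb] := green_rb_apex_nongreen tT.
move: tT; rewrite inE => /and4P [yY aX bX /and3P [ab _ _]].
set S := [set a; b]; set G := [set x in X | c y x == Green].
have SG : [disjoint S & G].
  rewrite -setI_eq0; apply/eqP/setP => x; rewrite !inE.
  by case: eqP => [->|_]; case: eqP => [->|_]; rewrite ?(negbTE ya) ?(negbTE yb) ?andbF.
have -> : [set h | captures h i (y, (a, b))] = [set h : {ffun 'I_n -> 'I_d.+1} |
            [forall x in S, h x == i] && [forall x in G, h x != i]].
  apply/setP => h; rewrite !inE /captures /avoids /= andbA; congr (_ && _).
    apply/andP/forall_inP => [[ha hb] x|hS]; last by rewrite !hS ?inE ?eqxx ?orbT.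
    by rewrite !inE => /orP [] /eqP ->.
  by apply: eq_forallb => x; rewrite !inE; case: (x \in X).
have n_split : n = #|G| + #|~: (S :|: G)| + 2.
  rewrite -[LHS]card_ord -(cardsC (S :|: G)) cardsU (disjoint_setI0 SG) cards0 subn0.
  by rewrite /S cards2 (negbT (ltn_eqF ab)) [RHS]addnC addnA.
have G_le : #|G| <= d.
  apply: leq_trans (subset_leq_card _) (green_deg yY); apply/subsetP => x; rewrite !inE => /andP [xX g].
  by rewrite xX g (X_neq_Y xX yY).
by rewrite card_ffun_pinned // {1}n_split; apply: expn_capture_le.
Qed.

Lemma card_green_rb_triples_lb :
  #|T| * (expn d.+1 n * expn d d) <= expn d.+1 d.+1 * \sum_h \sum_i #|captured_triples h i|.
Proof.
rewrite sum_card_captured_triples big_distrr -sum_nat_const /=.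
apply: leq_sum => t tT.
have : \sum_(i < d.+1) expn d.+1 n * expn d d
         <= \sum_i expn d.+1 d.+2 * #|[set h | captures h i t]|.
  by apply: leq_sum => i _; apply: card_capturing_ge.
by rewrite sum_nat_const card_ord -big_distrr /= expnS -mulnA leq_pmul2l.
Qed.

Lemma card_green_rb_triples_le :
  (INR #|T| * (2 * ln 2) <= exp 1 * INR d.+1 * nlnn #|X|)%R.
Proof.
have lb := le_INR _ _ (elimT leP card_green_rb_triples_lb).
have ub := sum_card_captured_triples_le.
have e_bound := pow_succ_le_exp1 d.
rewrite !mult_INR !INR_expn in lb ub.
set S := INR (\sum_h _) in lb ub; set D := INR d.+1 in lb e_bound *.
set P := (D ^ n)%R in lb ub; set Q := (INR d ^ d)%R in lb e_bound.
set NL := nlnn #|X|; have NL_ge0 : (0 <= NL)%R by apply: nlnn_ge0.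
rewrite (Rmult_assoc P) in ub; change (INR #|X| * ln (INR #|X|))%R with NL in ub.
change (D ^ d.+1)%R with (D * D ^ d)%R in lb.
have P_gt0 : (0 < P)%R by apply/pow_lt/lt_0_INR/ltP.
have Q_gt0 : (0 < Q)%R.
  by rewrite /Q; case: (d) => [|d']; [apply: Rlt_0_1 | apply/pow_lt/lt_0_INR/ltP].
have D_ge0 : (0 <= D)%R by apply: pos_INR.
have DDd_ge0 : (0 <= D * D ^ d)%R by apply/Rmult_le_pos/pow_le.
have ln2_gt0 : (0 < ln 2)%R by have := ln_lt_2; lra.
apply: (Rmult_le_reg_r (P * Q)); first exact: Rmult_lt_0_compat.
apply: (Rle_trans _ (D * D ^ d * (P * NL))).
  have := Rmult_le_compat_r (2 * ln 2) _ _ ltac:(lra) lb.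
  have := Rmult_le_compat_l _ _ _ DDd_ge0 ub.
  lra.
have DPNL_ge0 : (0 <= D * (P * NL))%R by apply/Rmult_le_pos/Rmult_le_pos; lra.
have := Rmult_le_compat_r _ _ _ DPNL_ge0 e_bound.
lra.
Qed.
End GreenRainbowTriangles.

Theorem lemma5p2 (n d : nat) (X Y : {set 'I_n})
  (c : 'I_n -> 'I_n -> colour) :
  X :&: Y = set0 -> X :|: Y = [set: 'I_n] ->
  edge_colouring c -> almost_gallai c ->
  (forall y, y \in Y -> (#|NG c y :&: X| <= d)%N) ->
  Rle (INR (tau_rb c Green X Y))
      (Rmult (Rmult (Rmult (Rdiv (exp 1) 2) (INR d.+1)) (INR #|X|))
             (log2 (INR #|X|))).
Proof.
move=> XY0 _ c_sym c_ag green_deg.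
have bound := card_green_rb_triples_le XY0 c_sym c_ag green_deg.
have ln2_gt0 : (0 < ln 2)%R by have := ln_lt_2; lra.
apply: (Rmult_le_reg_r (2 * ln 2)); first lra.
apply: (Rle_trans _ _ _ bound); apply: Req_le; rewrite /nlnn /log2; field; lra.
Qed.
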